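(* Let $I$ be a nontrivial real interval and let $g\colon I^*\to I$ be a function. The following assertions are equivalent: (i) $g$ is associative (in the sense defined in the context); (ii) $g(\mathbf{x}\,g(\mathbf{y})\,\mathbf{z})=g(\mathbf{x}'\,g(\mathbf{y}')\,\mathbf{z}')$ for all strings $\mathbf{x},\mathbf{y},\mathbf{z},\mathbf{x}',\mathbf{y}',\mathbf{z}'\in I^*$ such that $\mathbf{x}\mathbf{y}\mathbf{z}=\mathbf{x}'\mathbf{y}'\mathbf{z}'$; (iii) $g(\mathbf{x}\,g(\mathbf{y})\,\mathbf{z})=g(\mathbf{x}\mathbf{y}\mathbf{z})$ for all $\mathbf{x},\mathbf{y},\mathbf{z}\in I^*$; (iv) $g(g(\mathbf{x})\,g(\mathbf{y}))=g(\mathbf{x}\mathbf{y})$ for all $\mathbf{x},\mathbf{y}\in I^*$.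
   Context: Tuples in $I^m$ are regarded as strings of length $m$ over $I$; $\varepsilon$ denotes the empty string, $I^0=\{\varepsilon\}$, and $I^*=\bigcup_{m\ge 0}I^m$, endowed with concatenation written by juxtaposition. For $g\colon I^*\to I$, $g_m$ denotes the restriction of $g$ to $I^m$, with the convention $g_0(\varepsilon)=\varepsilon$ (so that a $g(\varepsilon)$ appearing inside a string is the empty string). A binary function $h\colon I^2\to I$ is associative if $h(h(xy)z)=h(x\,h(yz))$ for all $x,y,z\in I$. A function $g\colon I^*\to I$ is called associative if (a) $g_2$ is associative; (b) for every $m>2$ and $x_1,\dots,x_m\in I$, $g_m(x_1\cdots x_m)=g_2(g_2(\cdots g_2(g_2(x_1x_2)x_3)\cdots)x_m)$; and (c) $g_1\circ g=g$ and $g(\mathbf{x}\,g_1(y)\,\mathbf{z})=g(\mathbf{x}y\mathbf{z})$ for all $\mathbf{x},\mathbf{z}\in I^*$, $y\in I$. *)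

From mathcomp Require Import all_boot all_order all_algebra.
From mathcomp Require Import reals.
Set Implicit Arguments. Unset Strict Implicit. Unset Printing Implicit Defensive.
Import Order.TTheory GRing.Theory Num.Theory.
Local Open Scope ring_scope.

Section Defs.
Variable R : realType.

Definition nontrivial_itv (I : interval R) : Prop :=
  exists a b : R, [/\ a \in I, b \in I & a < b].

Definition istr (I : interval R) (s : seq R) : bool := all (fun x => x \in I) s.

(* g : I^* -> I, represented as a function on seq R whose values on nonempty
   strings over I lie in I.  (Its value on the empty string is irrelevant:
   g(eps) is the empty string by convention, see [gstr].) *)
Definition maps_into (I : interval R) (g : seq R -> R) : Prop :=
  forall s, istr I s -> s != [::] -> g s \in I.

(* g(s) as a string: the empty string if s is empty (g_0(eps) = eps),
   otherwise the one-letter string g(s). *)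
Definition gstr (g : seq R -> R) (s : seq R) : seq R :=
  if s is [::] then [::] else [:: g s].

Definition assoc2 (I : interval R) (g : seq R -> R) : Prop :=
  forall x y z, x \in I -> y \in I -> z \in I ->
    g [:: g [:: x; y]; z] = g [:: x; g [:: y; z]].

(* associativity of g : I^* -> I as in the paper, conditions (a),(b),(c) *)
Definition assoc_fun (I : interval R) (g : seq R -> R) : Prop :=
  [/\ assoc2 I g,
      (forall x1 x2 s, istr I (x1 :: x2 :: s) -> (0 < size s)%N ->
         g (x1 :: x2 :: s) = foldl (fun a b => g [:: a; b]) (g [:: x1; x2]) s),
      (forall s, istr I s -> g (gstr g s) = g s) &
      (forall x y z, istr I x -> y \in I -> istr I z ->
         g (x ++ [:: g [:: y]] ++ z) = g (x ++ y :: z))].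
End Defs.

(* Under condition (b), [g] agrees on strings of length at least 2 with the left
   fold of its binary restriction [g2], and the associativity of [g2] lets the
   fold of a substring be inserted inside a fold without changing it; together
   with condition (c) for the short strings this gives (iii).
   Conversely (iii) contains (a), (b), (c) as special cases, and (ii), (iv) are
   reformulations of (iii): (ii) because both sides of (ii) reduce to
   [g (x ++ y ++ z)] by (iii), and (iv) because under (iv) [g] is idempotent on
   [gstr g y], which lets one collapse the middle block. *)

From mathcomp Require Import all_boot all_order all_algebra.
From mathcomp Require Import reals.
From mathcomp Require Import zify.
Set Implicit Arguments. Unset Strict Implicit. Unset Printing Implicit Defensive.
Local Open Scope ring_scope.

Section AssociativeFunctions.
Variables (R : realType) (I : interval R) (g : seq R -> R).

Local Notation g2 := (fun a b => g [:: a; b]).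

(* The value [0] on the empty string is junk. *)
Definition gfold (s : seq R) : R := if s is a :: t then foldl g2 a t else 0.

Definition flattening : Prop :=
  forall x y z, istr I x -> istr I y -> istr I z ->
    g (x ++ gstr g y ++ z) = g (x ++ y ++ z).

Lemma istr_cat x y : istr I (x ++ y) = istr I x && istr I y.
Proof. by rewrite /istr all_cat. Qed.

Lemma gstr_nonempty y : y != [::] -> gstr g y = [:: g y].
Proof. by case: y. Qed.

Section MapsInto.
Hypothesis g_in : maps_into I g.

Lemma istr_gstr y : istr I y -> istr I (gstr g y).
Proof. by case: y => [|a y] //= hy; rewrite /istr /= g_in. Qed.

Lemma foldl_g2_in a t : a \in I -> istr I t -> foldl g2 a t \in I.
Proof.
elim: t a => //= b t IH a ha /andP[hb ht]; apply: IH => //.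
by apply: g_in; rewrite /istr /= ?ha ?hb.
Qed.

Lemma gfold_in s : istr I s -> s != [::] -> gfold s \in I.
Proof. by case: s => //= a s /andP[ha hs] _; apply: foldl_g2_in. Qed.

Lemma foldl_g2A : assoc2 I g -> forall a b t, a \in I -> b \in I -> istr I t ->
  foldl g2 (g [:: a; b]) t = g [:: a; foldl g2 b t].
Proof.
move=> g2A a b t; elim: t b => //= c t IH b ha hb /andP[hc ht].
rewrite g2A // IH //; apply: g_in => //.
by rewrite /istr /= hb hc.
Qed.

Lemma gfold_flatten : assoc2 I g -> forall x y z,
  istr I x -> istr I y -> istr I z -> y != [::] ->
  gfold (x ++ gfold y :: z) = gfold (x ++ y ++ z).
Proof.
move=> g2A x [|b y] z //= hx /andP[hb hy] hz _.
case: x hx => [|a x] /= hx; first by rewrite foldl_cat.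
case/andP: hx => ha hx.
rewrite !foldl_cat /= foldl_cat [in RHS]foldl_g2A //.
exact: foldl_g2_in.
Qed.

End MapsInto.

Lemma g_gfold :
  (forall x1 x2 s, istr I (x1 :: x2 :: s) -> (0 < size s)%N ->
     g (x1 :: x2 :: s) = foldl g2 (g [:: x1; x2]) s) ->
  forall s, istr I s -> (1 < size s)%N -> g s = gfold s.
Proof. by move=> gfoldl [|x1 [|x2 [|x3 s]]] //= hs _; rewrite gfoldl. Qed.

Lemma assoc_fun_flattening : maps_into I g -> assoc_fun I g -> flattening.
Proof.
move=> g_in [g2A gfoldl gg1 g_g1] x y z hx hy hz.
case: y hy => [|b [|c y]] hy //; first by rewrite /= g_g1 //; case/andP: hy.
move: hy; rewrite [gstr _ _]/=; set y' := b :: c :: y => hy.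
have hy'2 : (1 < size y')%N by [].
have gy : g y' = gfold y' by apply: g_gfold.
have [/eqP|xz_ne0] := posnP (size x + size z).
  rewrite addn_eq0 !size_eq0 => /andP[/eqP -> /eqP ->].
  by rewrite /= !cats0 (gg1 y').
have gy_in : gfold y' \in I by apply: gfold_in.
rewrite gy !g_gfold ?gfold_flatten //.
- by rewrite !istr_cat hx hy hz.
- by rewrite !size_cat; move: xz_ne0 hy'2; lia.
- by rewrite !istr_cat hx hz /istr /= gy_in.
- by rewrite !size_cat /=; move: xz_ne0; lia.
Qed.

Lemma flattening_assoc_fun : flattening -> assoc_fun I g.
Proof.
move=> flat; split.
- move=> x y z hx hy hz.
  have := flat [::] [:: x; y] [:: z]; have := flat [:: x] [:: y; z] [::].
  by rewrite /= /istr /= hx hy hz => <- // <-.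
- move=> x1 x2 s + _; elim/last_ind: s => [|s b IH] //.
  rewrite -cats1 -!cat_cons istr_cat => /andP[hs hb].
  rewrite foldl_cat /= -IH //.
  by have := flat [::] (x1 :: x2 :: s) [:: b] isT hs hb.
- by move=> s hs; have := flat [::] s [::]; rewrite /= !cats0; apply.
- move=> x y z hx hy hz; apply: (flat x [:: y] z) => //.
  by rewrite /istr /= hy.
Qed.

Lemma flattening_iff_invariant :
  (forall x y z x' y' z', istr I x -> istr I y -> istr I z ->
     istr I x' -> istr I y' -> istr I z' ->
     x ++ y ++ z = x' ++ y' ++ z' ->
     g (x ++ gstr g y ++ z) = g (x' ++ gstr g y' ++ z')) <-> flattening.
Proof.
split=> [inv x y z hx hy hz | flat x y z x' y' z' hx hy hz hx' hy' hz' xyz].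
  by rewrite (inv x y z (x ++ y) [::] z) /= -?catA // istr_cat hx hy.
by rewrite !flat // xyz.
Qed.

Lemma flattening_iff_merge : maps_into I g ->
  (forall x y, istr I x -> istr I y -> g (gstr g x ++ gstr g y) = g (x ++ y))
  <-> flattening.
Proof.
move=> g_in; split=> [merge | flat x y hx hy].
- have gg : forall s, istr I s -> g (gstr g s) = g s.
    by move=> s hs; have := merge s [::] hs isT; rewrite !cats0.
  have merge_r : forall x y, istr I x -> istr I y -> y != [::] ->
      g (x ++ gstr g y) = g (x ++ y).
    move=> x y hx hy y0.
    have ggy : gstr g (gstr g y) = gstr g y.
      by rewrite (gstr_nonempty y0) /=; congr [:: _]; rewrite -gstr_nonempty ?gg.
    by rewrite -(merge x (gstr g y)) ?istr_gstr // ggy merge.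
  move=> x y z hx hy hz.
  have [-> //|y0] := eqVneq y [::].
  have xy0 : x ++ y != [::].
    by rewrite -size_eq0 size_cat addn_eq0 !size_eq0 negb_and y0 orbT.
  have xgy0 : x ++ gstr g y != [::].
    by rewrite gstr_nonempty // -size_eq0 size_cat addn1.
  rewrite !catA -(merge (x ++ gstr g y) z) ?istr_cat ?hx ?istr_gstr //.
  rewrite -(merge (x ++ y) z) ?istr_cat ?hx ?hy //.
  by rewrite (gstr_nonempty xgy0) (gstr_nonempty xy0) (merge_r x y).
- have := flat (gstr g x) y [::] (istr_gstr g_in hx) hy isT.
  have := flat [::] x y isT hx hy.
  by rewrite !cats0 /= => -> ->.
Qed.

End AssociativeFunctions.

Theorem proposition2p2 (R : realType) (I : interval R) (g : seq R -> R) :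
  nontrivial_itv I -> maps_into I g ->
  [/\ (assoc_fun I g <->
        (forall x y z x' y' z', istr I x -> istr I y -> istr I z ->
           istr I x' -> istr I y' -> istr I z' ->
           x ++ y ++ z = x' ++ y' ++ z' ->
           g (x ++ gstr g y ++ z) = g (x' ++ gstr g y' ++ z'))),
      (assoc_fun I g <->
        (forall x y z, istr I x -> istr I y -> istr I z ->
           g (x ++ gstr g y ++ z) = g (x ++ y ++ z))) &
      (assoc_fun I g <->
        (forall x y, istr I x -> istr I y ->
           g (gstr g x ++ gstr g y) = g (x ++ y)))].
Proof.
(* The equivalences hold on any set of reals. *)
move=> _ g_in.
have assoc_flat : assoc_fun I g <-> flattening I g.
  by split; [exact: assoc_fun_flattening | exact: flattening_assoc_fun].
split.
- exact: iff_trans assoc_flat (iff_sym (flattening_iff_invariant I g)).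
- exact: assoc_flat.
- exact: iff_trans assoc_flat (iff_sym (flattening_iff_merge g_in)).
Qed.
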